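(* Let $\mathfrak E=(\mathfrak e_1,\dots,\mathfrak e_n)$ be an admissible sequence of virtual extended $\mathbb Z$-segments such that $\mathrm{Supp}(\mathfrak e_1)\supseteq\mathrm{Supp}(\mathfrak e_2)\supseteq\cdots\supseteq\mathrm{Supp}(\mathfrak e_n)$. Then $\mathrm{NV}(\mathfrak E)\ne0$ if and only if $\widetilde{\mathrm{NV}}(\mathfrak E)\ne0$.
   Context: A $\mathbb Z$-segment is $[A,B]=\{A,\dots,B\}$ ($A\ge B$ integers), length $b=A-B+1$. A virtual extended $\mathbb Z$-segment is $([A,B],l,\eta)$, $l\in\mathbb Z$, $l\le b/2$, $\eta\in\{\pm1\}$ with $\eta\sim-\eta$ iff $b=2l$; extended if $l\ge0$; $\mathrm{Supp}=[A,B]$. A sequence with supports $[A_i,B_i]$ is admissible if $A_i<A_j$ and $B_i<B_j$ imply $i<j$. Pairwise non-vanishing: for admissible $(\mathfrak e_1,\mathfrak e_2)$, $\mathfrak e_i=([A_i,B_i],l_i,\eta_i)$, $b_i=A_i-B_i+1$, $\epsilon=(-1)^{A_1-B_1}\eta_1\eta_2$, $\mathrm{NV}(\mathfrak e_1,\mathfrak e_2)\ne0$ iff both are extended and all applicable conditions hold: (a) if $A_1\le A_2$, $B_1\le B_2$: $\epsilon=1\Rightarrow B_1+l_1\le B_2+l_2,\ A_1-l_1\le A_2-l_2$; $\epsilon=-1\Rightarrow A_1-l_1<B_2+l_2$; (b) if $A_1\le A_2$, $B_1\ge B_2$: $\epsilon=1\Rightarrow0\le l_2-l_1\le b_2-b_1$;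 $\epsilon=-1\Rightarrow l_1+l_2\ge b_1$; (c) if $A_1\ge A_2$, $B_1\le B_2$: $\epsilon=1\Rightarrow0\le l_1-l_2\le b_1-b_2$; $\epsilon=-1\Rightarrow l_1+l_2\ge b_2$. Row exchange $R(\mathfrak e_1,\mathfrak e_2)=(\mathfrak e_2',\mathfrak e_1')$ for nested supports, $\mathfrak e_i'=([A_i,B_i],l_i',\eta_i')$: Case 1, $[A_1,B_1]\subseteq[A_2,B_2]$: $(l_1',\eta_1')=(l_1,(-1)^{A_2-B_2}\eta_1)$; if $\epsilon=1$ and $b_2-2l_2<2(b_1-2l_1)$, $(l_2',\eta_2')=(b_2-l_2-(b_1-2l_1),(-1)^{A_1-B_1}\eta_2)$; if $\epsilon=1$ and $b_2-2l_2\ge2(b_1-2l_1)$, $(l_2',\eta_2')=(l_2+b_1-2l_1,(-1)^{A_1-B_1+1}\eta_2)$; if $\epsilon=-1$, $(l_2',\eta_2')=(l_2-(b_1-2l_1),(-1)^{A_1-B_1+1}\eta_2)$. Case 2, $[A_1,B_1]\supsetneq[A_2,B_2]$: $(l_2',\eta_2')=(l_2,(-1)^{A_1-B_1}\eta_2)$; if $\epsilon=1$ and $b_1-2l_1<2(b_2-2l_2)$, $(l_1',\eta_1')=(b_1-l_1-(b_2-2l_2),(-1)^{A_2-B_2}\eta_1)$; if $\epsilon=1$ and $b_1-2l_1\ge2(b_2-2l_2)$, $(l_1',\eta_1')=(l_1+b_2-2l_2,(-1)^{A_2-B_2+1}\eta_1)$; if $\epsilon=-1$, $(l_1',\eta_1')=(l_1-(b_2-2l_2),(-1)^{A_2-B_2+1}\eta_1)$.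 $R_k(\mathfrak E)$ replaces consecutive entries $(\mathfrak e_k,\mathfrak e_{k+1})$ with nested supports by $R(\mathfrak e_k,\mathfrak e_{k+1})$; $[\mathfrak E]$ is the set of sequences obtained from $\mathfrak E$ by finitely many $R_k$. $\widetilde{\mathrm{NV}}(\mathfrak E)\ne0$ means $\mathrm{NV}(\mathfrak e_i,\mathfrak e_{i+1})\ne0$ for all $1\le i\le n-1$; $\mathrm{NV}(\mathfrak E)\ne0$ means $\widetilde{\mathrm{NV}}(\mathfrak E')\ne0$ for all $\mathfrak E'\in[\mathfrak E]$. *)

From Stdlib Require Import ZArith List Lia Bool.
Open Scope Z_scope.
Import ListNotations.

(** A (representative of a) virtual extended Z-segment ([A,B], l, eta). *)
Record vseg := VSeg { sA : Z; sB : Z; sl : Z; seta : Z }.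

Definition blen (e : vseg) : Z := sA e - sB e + 1.

Definition sgn (k : Z) : Z := if Z.even k then 1 else -1.

Definition valid_vseg (e : vseg) : Prop :=
  sB e <= sA e /\ 2 * sl e <= blen e /\ (seta e = 1 \/ seta e = -1).

Definition extended (e : vseg) : Prop := 0 <= sl e.

Definition admissible (E : list vseg) : Prop :=
  forall i j d, (i < length E)%nat -> (j < length E)%nat ->
    sA (nth i E d) < sA (nth j E d) -> sB (nth i E d) < sB (nth j E d) ->
    (i < j)%nat.

Definition eps (e1 e2 : vseg) : Z := sgn (sA e1 - sB e1) * seta e1 * seta e2.

Definition NV2 (e1 e2 : vseg) : Prop :=
  let A1 := sA e1 in let B1 := sB e1 in let l1 := sl e1 in let b1 := blen e1 in
  let A2 := sA e2 in let B2 := sB e2 in let l2 := sl e2 in let b2 := blen e2 in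
  let ep := eps e1 e2 in
  extended e1 /\ extended e2 /\
  (A1 <= A2 -> B1 <= B2 ->
     (ep = 1 -> B1 + l1 <= B2 + l2 /\ A1 - l1 <= A2 - l2) /\
     (ep = -1 -> A1 - l1 < B2 + l2)) /\
  (A1 <= A2 -> B1 >= B2 ->
     (ep = 1 -> 0 <= l2 - l1 <= b2 - b1) /\
     (ep = -1 -> l1 + l2 >= b1)) /\
  (A1 >= A2 -> B1 <= B2 ->
     (ep = 1 -> 0 <= l1 - l2 <= b1 - b2) /\
     (ep = -1 -> l1 + l2 >= b2)).

Definition nested (e1 e2 : vseg) : Prop :=
  (sA e1 <= sA e2 /\ sB e2 <= sB e1) \/ (sA e2 <= sA e1 /\ sB e1 <= sB e2).

Definition row_exchange (e1 e2 : vseg) : vseg * vseg :=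
  let A1 := sA e1 in let B1 := sB e1 in let l1 := sl e1 in let b1 := blen e1 in
  let A2 := sA e2 in let B2 := sB e2 in let l2 := sl e2 in let b2 := blen e2 in
  let h1 := seta e1 in let h2 := seta e2 in
  let ep := eps e1 e2 in
  if (A1 <=? A2) && (B2 <=? B1) then
    let e1' := VSeg A1 B1 l1 (sgn (A2 - B2) * h1) in
    let e2' :=
      if ep =? 1 then
        if b2 - 2 * l2 <? 2 * (b1 - 2 * l1)
        then VSeg A2 B2 (b2 - l2 - (b1 - 2 * l1)) (sgn (A1 - B1) * h2)
        else VSeg A2 B2 (l2 + b1 - 2 * l1) (sgn (A1 - B1 + 1) * h2)
      else VSeg A2 B2 (l2 - (b1 - 2 * l1)) (sgn (A1 - B1 + 1) * h2) in
    (e2', e1')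
  else
    (* Case 2: [A1,B1] strictly contains [A2,B2] *)
    let e2' := VSeg A2 B2 l2 (sgn (A1 - B1) * h2) in
    let e1' :=
      if ep =? 1 then
        if b1 - 2 * l1 <? 2 * (b2 - 2 * l2)
        then VSeg A1 B1 (b1 - l1 - (b2 - 2 * l2)) (sgn (A2 - B2) * h1)
        else VSeg A1 B1 (l1 + b2 - 2 * l2) (sgn (A2 - B2 + 1) * h1)
      else VSeg A1 B1 (l1 - (b2 - 2 * l2)) (sgn (A2 - B2 + 1) * h1) in
    (e2', e1').

Inductive Rstep : list vseg -> list vseg -> Prop :=
| Rstep_intro : forall pre e1 e2 post,
    nested e1 e2 ->
    Rstep (pre ++ e1 :: e2 :: post)
          (pre ++ fst (row_exchange e1 e2) :: snd (row_exchange e1 e2) :: post).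

Inductive in_class (E : list vseg) : list vseg -> Prop :=
| in_class_refl : in_class E E
| in_class_step : forall E' E'', in_class E E' -> Rstep E' E'' -> in_class E E''.

Fixpoint NVtilde (E : list vseg) : Prop :=
  match E with
  | e1 :: ((e2 :: _) as t) => NV2 e1 e2 /\ NVtilde t
  | _ => True
  end.

Definition NV (E : list vseg) : Prop := forall E', in_class E E' -> NVtilde E'.

Definition supp_sup (e1 e2 : vseg) : Prop := sA e2 <= sA e1 /\ sB e1 <= sB e2.

Fixpoint supp_decreasing (E : list vseg) : Prop :=
  match E with
  | e1 :: ((e2 :: _) as t) => supp_sup e1 e2 /\ supp_decreasing t
  | _ => True
  end.

From Stdlib Require Import ZArith List Lia Bool.
Open Scope Z_scope.
Import ListNotations.

(* A virtual segment e preceded by segments e_j with sum_j (A_j - B_j) = k is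
   recorded by its support and the integer x = (-1)^k eta (b - 2l).  For nested
   supports, NV(e1, e2) <> 0 then reads |x1| <= b1, |x2| <= b2 and
   |x1 - x2| <= |b1 - b2|, and the row exchange swaps the two entries while
   reflecting the value of the larger one about that of the smaller one.
   Call a sequence pairwise compatible if each entry, carried past every later
   entry by these reflections, is compatible with it.  Pairwise compatibility
   implies NV~ and, because reflections satisfy a braid relation, survives row
   exchanges.  When the supports decrease, an entry carried past smaller
   segments keeps its support and stays compatible with the next one, so NV~
   already implies pairwise compatibility. *)

Record xseg := XSeg { xA : Z; xB : Z; xval : Z }.

Definition xlen (p : xseg) : Z := xA p - xB p + 1.

Definition xsubseg (p q : xseg) : Prop := xA p <= xA q /\ xB q <= xB p.

Definition xcompat (p q : xseg) : Prop :=
  (xsubseg p q \/ xsubseg q p) /\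
  Z.abs (xval p - xval q) <= Z.abs (xlen p - xlen q) /\
  Z.abs (xval p) <= xlen p /\ Z.abs (xval q) <= xlen q.

Definition xreflect (p c : xseg) : xseg := XSeg (xA p) (xB p) (2 * xval c - xval p).

Definition xexchange (p q : xseg) : xseg * xseg :=
  if (xA p <=? xA q) && (xB q <=? xB p) then (xreflect q p, p) else (q, xreflect p q).

Definition xpass (p q : xseg) : xseg := snd (xexchange p q).

Lemma xsubseg_trans p q r : xsubseg p q -> xsubseg q r -> xsubseg p r.
Proof. unfold xsubseg; lia. Qed.

Lemma xexchange_cases p q :
  xsubseg p q /\ xexchange p q = (xreflect q p, p) \/
  ~ xsubseg p q /\ xexchange p q = (q, xreflect p q).
Proof.
  unfold xsubseg, xexchange.
  destruct (Z.leb_spec (xA p) (xA q)), (Z.leb_spec (xB q) (xB p)); cbn;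
    [left | right..]; split; auto; lia.
Qed.

Lemma xpass_supp p q : xA (xpass p q) = xA p /\ xB (xpass p q) = xB p.
Proof. unfold xpass; destruct (xexchange_cases p q) as [[_ ->] | [_ ->]]; auto. Qed.

Ltac case_xexchange :=
  repeat match goal with
  | |- context [xexchange ?p ?q] =>
      destruct (xexchange_cases p q) as [[? ->] | [? ->]]; cbn [fst snd]
  end.

Ltac elim_abs t :=
  first [ assert (0 <= t) by lia; rewrite (Z.abs_eq t) in * by assumption
        | assert (t <= 0) by lia; rewrite (Z.abs_neq t) in * by assumption
        | destruct (Z.abs_spec t) as [[? Habs] | [? Habs]]; rewrite Habs in *; clear Habs ].

(* Case analysis on the supports fixes the sign of every difference of lengths,
   after which everything is linear. *)
Ltac solve_xseg :=
  unfold xpass; case_xexchange;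
  unfold xcompat, xreflect, xsubseg, xlen in *; cbn [xA xB xval] in *;
  intros;
  repeat match goal with
  | H : _ /\ _ |- _ => destruct H
  | H : _ \/ _ |- _ => destruct H
  | H : Z.abs _ <= _ |- _ => apply Z.abs_le in H
  | _ : context [Z.abs ?t] |- _ => elim_abs t
  end;
  try (exfalso; lia);
  repeat split;
  repeat match goal with
  | |- Z.abs _ <= _ => apply Z.abs_le
  | |- context [Z.abs ?t] => elim_abs t
  end;
  try lia; f_equal; lia.

Lemma xcompat_xexchange p q : xcompat p q ->
  xcompat (fst (xexchange p q)) (snd (xexchange p q)) /\
  xpass (fst (xexchange p q)) (snd (xexchange p q)) = q.
Proof. destruct p, q; solve_xseg. Qed.

Lemma xcompat_xpass_xexchange p a b :
  xcompat p a -> xcompat (xpass p a) b -> xcompat a b ->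
  xcompat p (fst (xexchange a b)) /\
  xcompat (xpass p (fst (xexchange a b))) (snd (xexchange a b)) /\
  xpass (xpass p (fst (xexchange a b))) (snd (xexchange a b)) = xpass (xpass p a) b.
Proof. destruct p, a, b; solve_xseg. Qed.

Lemma xcompat_xpass_decr p a b :
  xsubseg a p -> xsubseg b a -> xcompat p a -> xcompat a b -> xcompat (xpass p a) b.
Proof. destruct p, a, b; solve_xseg. Qed.

Fixpoint xcompat_all (p : xseg) (l : list xseg) : Prop :=
  match l with
  | [] => True
  | q :: r => xcompat p q /\ xcompat_all (xpass p q) r
  end.

Fixpoint pairwise_xcompat (l : list xseg) : Prop :=
  match l with
  | [] => True
  | p :: r => xcompat_all p r /\ pairwise_xcompat r
  end.

Lemma xcompat_all_app p l1 l2 :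
  xcompat_all p (l1 ++ l2) <-> xcompat_all p l1 /\ xcompat_all (fold_left xpass l1 p) l2.
Proof.
  revert p; induction l1 as [|q l1 IH]; intros p; cbn.
  - tauto.
  - rewrite IH; tauto.
Qed.

Lemma xcompat_all_xexchange p a b l : xcompat a b ->
  xcompat_all p (a :: b :: l) ->
  xcompat_all p (fst (xexchange a b) :: snd (xexchange a b) :: l).
Proof.
  cbn; intros Hab (Hpa & Hb & Hl).
  destruct (xcompat_xpass_xexchange p a b Hpa Hb Hab) as (? & ? & ->).
  tauto.
Qed.

Lemma pairwise_xcompat_adjacent pre a b post :
  pairwise_xcompat (pre ++ a :: b :: post) -> xcompat a b.
Proof. induction pre as [|p pre IH]; cbn; tauto. Qed.

Lemma pairwise_xcompat_xexchange pre a b post :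
  pairwise_xcompat (pre ++ a :: b :: post) ->
  pairwise_xcompat (pre ++ fst (xexchange a b) :: snd (xexchange a b) :: post).
Proof.
  intros H; pose proof (pairwise_xcompat_adjacent pre a b post H) as Hab.
  revert H; induction pre as [|p pre IH]; cbn [app pairwise_xcompat xcompat_all].
  - destruct (xcompat_xexchange a b Hab) as [Hab' ->].
    change (snd (xexchange a b)) with (xpass a b); tauto.
  - rewrite !xcompat_all_app; intros ([Hpre Hp] & Hr).
    split; [split; [exact Hpre | apply xcompat_all_xexchange; assumption] | auto].
Qed.

Fixpoint xchain (l : list xseg) : Prop :=
  match l with
  | p :: (q :: _) as r => xsubseg q p /\ xcompat p q /\ xchain r
  | _ => True
  end.

Lemma xchain_xcompat_all l : forall p q,
  xsubseg q p -> xcompat p q -> xchain (q :: l) -> xcompat_all p (q :: l).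
Proof.
  induction l as [|r l IH]; intros p q Hqp Hpq Hl; cbn; [tauto|].
  destruct Hl as (Hrq & Hqr & Hl).
  split; [exact Hpq|].
  apply IH; [| apply xcompat_xpass_decr; assumption | exact Hl].
  apply (xsubseg_trans _ q); [exact Hrq|].
  unfold xsubseg; destruct (xpass_supp p q) as [-> ->]; exact Hqp.
Qed.

Lemma xchain_pairwise_xcompat l : xchain l -> pairwise_xcompat l.
Proof.
  induction l as [|p l IH]; cbn; [tauto|].
  destruct l as [|q l]; [cbn; tauto|].
  intros (Hqp & Hpq & Hl); split; [apply xchain_xcompat_all; assumption | auto].
Qed.

Lemma sgn_cases k : sgn k = 1 \/ sgn k = -1.
Proof. unfold sgn; destruct (Z.even k); auto. Qed.

Lemma sgn_add m n : sgn (m + n) = sgn m * sgn n.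
Proof. unfold sgn; rewrite Z.even_add; destruct (Z.even m), (Z.even n); reflexivity. Qed.

Definition encode (k : Z) (e : vseg) : xseg :=
  XSeg (sA e) (sB e) (sgn k * seta e * (blen e - 2 * sl e)).

Fixpoint encode_seq (k : Z) (E : list vseg) : list xseg :=
  match E with
  | [] => []
  | e :: E' => encode k e :: encode_seq (k + (sA e - sB e)) E'
  end.

Definition parity_after (k : Z) (E : list vseg) : Z :=
  fold_left (fun k e => k + (sA e - sB e)) E k.

Lemma encode_seq_app k E1 E2 :
  encode_seq k (E1 ++ E2) = encode_seq k E1 ++ encode_seq (parity_after k E1) E2.
Proof.
  revert k; induction E1 as [|e E1 IH]; intros k; cbn; [reflexivity|].
  rewrite IH; reflexivity.
Qed.

Lemma NV2_xcompat k e1 e2 : valid_vseg e1 -> valid_vseg e2 -> nested e1 e2 ->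
  (NV2 e1 e2 <-> xcompat (encode k e1) (encode (k + (sA e1 - sB e1)) e2)).
Proof.
  destruct e1 as [A1 B1 l1 h1], e2 as [A2 B2 l2 h2].
  unfold valid_vseg, NV2, xcompat, xsubseg, encode, nested, eps, extended, xlen, blen.
  cbn [sA sB sl seta xA xB xval]; rewrite sgn_add.
  intros (? & ? & [-> | ->]) (? & ? & [-> | ->]) Hn;
    destruct (sgn_cases k) as [-> | ->], (sgn_cases (A1 - B1)) as [-> | ->]; lia.
Qed.

Ltac case_tests :=
  repeat match goal with
  | |- context [?a <=? ?b] => destruct (Z.leb_spec a b)
  | |- context [?a =? ?b] => destruct (Z.eqb_spec a b)
  | |- context [?a <? ?b] => destruct (Z.ltb_spec a b)
  end; cbn [andb fst snd sA sB sl seta xA xB xval].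

Lemma row_exchange_valid e1 e2 : valid_vseg e1 -> valid_vseg e2 -> nested e1 e2 ->
  valid_vseg (fst (row_exchange e1 e2)) /\ valid_vseg (snd (row_exchange e1 e2)).
Proof.
  destruct e1 as [A1 B1 l1 h1], e2 as [A2 B2 l2 h2].
  unfold valid_vseg, row_exchange, nested, eps, blen; cbv zeta; cbn [sA sB sl seta].
  pose proof (sgn_cases (A1 - B1)); pose proof (sgn_cases (A2 - B2));
  pose proof (sgn_cases (A1 - B1 + 1)); pose proof (sgn_cases (A2 - B2 + 1)).
  intros (? & ? & [-> | ->]) (? & ? & [-> | ->]) Hn; case_tests; lia.
Qed.

Lemma row_exchange_supp e1 e2 :
  sA (fst (row_exchange e1 e2)) = sA e2 /\ sB (fst (row_exchange e1 e2)) = sB e2 /\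
  sA (snd (row_exchange e1 e2)) = sA e1 /\ sB (snd (row_exchange e1 e2)) = sB e1.
Proof. unfold row_exchange; cbv zeta; case_tests; auto. Qed.

Lemma encode_row_exchange k e1 e2 : valid_vseg e1 -> valid_vseg e2 -> nested e1 e2 ->
  encode k (fst (row_exchange e1 e2)) =
    fst (xexchange (encode k e1) (encode (k + (sA e1 - sB e1)) e2)) /\
  encode (k + (sA e2 - sB e2)) (snd (row_exchange e1 e2)) =
    snd (xexchange (encode k e1) (encode (k + (sA e1 - sB e1)) e2)).
Proof.
  destruct e1 as [A1 B1 l1 h1], e2 as [A2 B2 l2 h2].
  unfold valid_vseg, row_exchange, xexchange, xreflect, encode, nested, eps, blen;
    cbv zeta; cbn [sA sB sl seta xA xB xval].
  rewrite !sgn_add; change (sgn 1) with (-1).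
  intros (? & ? & [-> | ->]) (? & ? & [-> | ->]) Hn;
  destruct (sgn_cases k) as [-> | ->], (sgn_cases (A1 - B1)) as [-> | ->],
    (sgn_cases (A2 - B2)) as [-> | ->];
  case_tests; split; f_equal; lia.
Qed.

Lemma Rstep_pairwise_xcompat k F F' : Rstep F F' -> Forall valid_vseg F ->
  pairwise_xcompat (encode_seq k F) ->
  Forall valid_vseg F' /\ pairwise_xcompat (encode_seq k F').
Proof.
  intros [pre e1 e2 post Hn] HV HG.
  apply Forall_app in HV as [HVpre HV].
  inversion HV as [|? ? Hv1 HV2]; subst; inversion HV2 as [|? ? Hv2 HVpost]; subst.
  destruct (row_exchange_valid e1 e2 Hv1 Hv2 Hn) as [Hv1' Hv2'].
  destruct (row_exchange_supp e1 e2) as (HA1 & HB1 & HA2 & HB2).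
  destruct (encode_row_exchange (parity_after k pre) e1 e2 Hv1 Hv2 Hn) as [E1 E2].
  split.
  - apply Forall_app; split; [exact HVpre | constructor; [| constructor]; assumption].
  - rewrite encode_seq_app in *; cbn [encode_seq] in *.
    rewrite HA1, HB1, E1, E2, HA2, HB2.
    replace (parity_after k pre + (sA e2 - sB e2) + (sA e1 - sB e1))
      with (parity_after k pre + (sA e1 - sB e1) + (sA e2 - sB e2)) by lia.
    apply pairwise_xcompat_xexchange; exact HG.
Qed.

Lemma in_class_pairwise_xcompat k E F : in_class E F -> Forall valid_vseg E ->
  pairwise_xcompat (encode_seq k E) ->
  Forall valid_vseg F /\ pairwise_xcompat (encode_seq k F).
Proof.
  induction 1 as [|F F' _ IH Hstep]; intros HV HG; [auto|].
  destruct (IH HV HG); apply (Rstep_pairwise_xcompat k F F'); assumption.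
Qed.

Lemma pairwise_xcompat_NVtilde k F : Forall valid_vseg F ->
  pairwise_xcompat (encode_seq k F) -> NVtilde F.
Proof.
  revert k; induction F as [|e1 F IH]; intros k HV HG; [exact I|].
  destruct F as [|e2 F]; [exact I|].
  inversion HV as [|? ? Hv1 HV2]; subst; inversion HV2 as [|? ? Hv2 _]; subst.
  cbn in HG; destruct HG as [[Hc _] HG].
  split.
  - apply (NV2_xcompat k); [assumption | assumption | | exact Hc].
    destruct Hc as [Hn _]; unfold xsubseg, nested in *; cbn in Hn; lia.
  - exact (IH _ HV2 HG).
Qed.

Lemma NVtilde_xchain k E : Forall valid_vseg E -> supp_decreasing E -> NVtilde E ->
  xchain (encode_seq k E).
Proof.
  revert k; induction E as [|e1 E IH]; intros k HV HD HN; [exact I|].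
  destruct E as [|e2 E]; [exact I|].
  inversion HV as [|? ? Hv1 HV2]; subst; inversion HV2 as [|? ? Hv2 _]; subst.
  destruct HD as [[HA HB] HD], HN as [HN12 HN].
  split; [| split].
  - unfold xsubseg; cbn; lia.
  - apply NV2_xcompat; [assumption | assumption | unfold nested; lia | exact HN12].
  - exact (IH _ HV2 HD HN).
Qed.

Theorem theorem4p15 (E : list vseg) :
  Forall valid_vseg E ->
  admissible E ->
  supp_decreasing E ->
  (NV E <-> NVtilde E).
Proof.
  intros HV _ HD; split.
  - intros HNV; apply HNV, in_class_refl.
  - intros HN F HF.
    pose proof (xchain_pairwise_xcompat _ (NVtilde_xchain 0 E HV HD HN)) as HE.
    destruct (in_class_pairwise_xcompat 0 E F HF HV HE) as [HVF HF'].
    exact (pairwise_xcompat_NVtilde 0 F HVF HF').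
Qed.
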